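(* Let $C\ge 2$ and $D$ be positive integers, and let $\mu_1,\dots,\mu_C\in\mathbb{R}^D$ be unit vectors forming a regular simplex, i.e. $\|\mu_j\|=1$ for all $j$ and $\mu_j^\top\mu_{j'}=-\frac{1}{C-1}$ for all $j\neq j'$. Let $\alpha\in[0,\pi/2]$ and let $A\in\mathbb{R}^{D\times D}$ be a real matrix with $A^\top=-A$ and $A^2=-I$. Put $R=\cos\alpha\, I+\sin\alpha\, A$ and $w_j=R\mu_j$ for $j=1,\dots,C$, and assume $\mu_j^\top w_j=\cos\alpha$ for every $j$. Then for every fixed class $c$ and every $c'\neq c$, $$\mu_c^\top w_{c'}=-\frac{\cos\alpha}{C-1}+\zeta_{c,c'},\qquad \zeta_{c,c'}:=\sin\alpha\;\mu_c^\top A\,\mu_{c'},$$ and the residuals satisfy $\sum_{c'\neq c}\zeta_{c,c'}=0$.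
   Context: Since the $\mu_j$ are unit vectors, they coincide with their normalizations $\hat\mu_j=\mu_j/\|\mu_j\|$; likewise $R$ is orthogonal, so $\hat w_j=w_j$. *)

From mathcomp Require Import all_boot all_order all_algebra.
From mathcomp Require Import all_classical all_reals all_analysis.
Set Implicit Arguments. Unset Strict Implicit. Unset Printing Implicit Defensive.
Import Order.TTheory GRing.Theory Num.Theory.
Local Open Scope ring_scope.

Definition dotv (R : realType) (D : nat) (u v : 'cV[R]_D) : R := (u^T *m v) 0 0.

Definition normv (R : realType) (D : nat) (u : 'cV[R]_D) : R := Num.sqrt (dotv u u).

From mathcomp Require Import all_boot all_order all_algebra.
From mathcomp Require Import all_classical all_reals all_analysis.
Import Order.TTheory GRing.Theory Num.Theory.
Local Open Scope ring_scope.

(* The first identity is bilinearity of the inner product applied to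
   R = cos a I + sin a A.  For the second, the Gram matrix of a regular simplex
   gives |sum_j mu_j|^2 = 0, so sum_(c' != c) mu_c' = - mu_c, and the sum of the
   residuals becomes - sin a * mu_c^T A mu_c, which vanishes because A is skew. *)

Section InnerProduct.
Variables (R : realType) (D : nat).
Implicit Types (u v w : 'cV[R]_D) (A : 'M[R]_D).

Lemma dotvE u v : dotv u v = \sum_i u i 0 * v i 0.
Proof. by rewrite /dotv !mxE; apply: eq_bigr => i _; rewrite mxE. Qed.

Lemma dotvC u v : dotv u v = dotv v u.
Proof. by rewrite !dotvE; apply: eq_bigr => i _; rewrite mulrC. Qed.

Lemma dotvDr u v w : dotv u (v + w) = dotv u v + dotv u w.
Proof. by rewrite /dotv mulmxDr mxE. Qed.

Lemma dotvZr u a v : dotv u (a *: v) = a * dotv u v.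
Proof. by rewrite /dotv -scalemxAr mxE. Qed.

Lemma dotvNr u v : dotv u (- v) = - dotv u v.
Proof. by rewrite /dotv mulmxN mxE. Qed.

Lemma dotv_sumr (I : finType) (P : pred I) u (F : I -> 'cV[R]_D) :
  dotv u (\sum_(i | P i) F i) = \sum_(i | P i) dotv u (F i).
Proof. by rewrite /dotv mulmx_sumr summxE. Qed.

Lemma dotv_suml (I : finType) (P : pred I) u (F : I -> 'cV[R]_D) :
  dotv (\sum_(i | P i) F i) u = \sum_(i | P i) dotv (F i) u.
Proof. by rewrite dotvC dotv_sumr; apply: eq_bigr => i _; rewrite dotvC. Qed.

Lemma dotvvE v : dotv v v = \sum_i v i 0 ^+ 2.
Proof. by rewrite dotvE; apply: eq_bigr => i _; rewrite expr2. Qed.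

Lemma dotvv_ge0 v : 0 <= dotv v v.
Proof. by rewrite dotvvE sumr_ge0 // => i _; rewrite sqr_ge0. Qed.

Lemma dotvv_eq0 v : dotv v v = 0 -> v = 0.
Proof.
rewrite dotvvE => /eqP.
rewrite psumr_eq0 => [/allP v0|i _]; last exact: sqr_ge0.
apply/matrixP => i j; rewrite (ord1 j) mxE.
by apply/eqP; rewrite -sqrf_eq0; exact: (implyP (v0 i (mem_index_enum i))).
Qed.

Lemma normv_eq1 v : normv v = 1 -> dotv v v = 1.
Proof.
by move=> v1; rewrite -(sqr_sqrtr (dotvv_ge0 v)) -/(normv v) v1 expr1n.
Qed.

Lemma dotv_mulmx_skew A u : A^T = - A -> dotv u (A *m u) = 0.
Proof.
move=> skewA; apply/eqP; rewrite -[_ == 0](mulrn_eq0 _ 2) mulr2n addr_eq0.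
have trE (M : 'M[R]_1) : M 0 0 = M^T 0 0 by rewrite mxE.
rewrite {1}/dotv trE !trmx_mul trmxK skewA mulmxN mulNmx -mulmxA.
by rewrite /dotv mxE.
Qed.

Lemma dotv_rotation a b A u v :
  dotv u ((a *: 1%:M + b *: A) *m v) = a * dotv u v + b * dotv u (A *m v).
Proof. by rewrite mulmxDl -!scalemxAl mul1mx dotvDr !dotvZr. Qed.

End InnerProduct.

Section RegularSimplex.
Variables (R : realType) (C D : nat) (mu : 'I_C -> 'cV[R]_D).
Hypothesis C_ge2 : (2 <= C)%N.
Hypothesis mu_unit : forall j, normv (mu j) = 1.
Hypothesis mu_simplex :
  forall j j', j != j' -> dotv (mu j) (mu j') = - (1 / (C%:R - 1)).

Lemma simplex_dotv_sum j : dotv (mu j) (\sum_k mu k) = 0.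
Proof.
have C1_neq0 : (C%:R - 1 : R) != 0.
  by rewrite subr_eq0 pnatr_eq1; case: (C) C_ge2 => [|[|]].
rewrite dotv_sumr (bigD1 j) //= normv_eq1 //.
rewrite (eq_bigr (fun=> - (1 / (C%:R - 1)))) => [|k kj]; last first.
  by rewrite mu_simplex // eq_sym.
rewrite sumr_const cardC1 card_ord -[Nat.pred C]/(C.-1) -subn1.
rewrite -[_ *+ (C - 1)]mulr_natr natrB; last exact: ltnW.
by rewrite mulNr div1r mulVf // addrN.
Qed.

Lemma simplex_sum_eq0 : \sum_j mu j = 0.
Proof.
by apply: dotvv_eq0; rewrite dotv_suml big1 // => j _; exact: simplex_dotv_sum.
Qed.

Lemma simplex_sum_neq c : \sum_(c' < C | c' != c) mu c' = - mu c.
Proof.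
move: simplex_sum_eq0; rewrite (bigD1 c) //= => /eqP.
by rewrite addrC addr_eq0 => /eqP.
Qed.

Lemma simplex_sum_neq_skew (A : 'M[R]_D) c : A^T = - A ->
  \sum_(c' < C | c' != c) dotv (mu c) (A *m mu c') = 0.
Proof.
by move=> skewA; rewrite -dotv_sumr -mulmx_sumr simplex_sum_neq mulmxN dotvNr
  dotv_mulmx_skew // oppr0.
Qed.

End RegularSimplex.

Theorem lemma3 (R : realType) (C D : nat) (hC : (2 <= C)%N) (hD : (0 < D)%N)
  (mu : 'I_C -> 'cV[R]_D)
  (hnorm : forall j, normv (mu j) = 1)
  (hsimp : forall j j', j != j' -> dotv (mu j) (mu j') = - (1 / (C%:R - 1)))
  (alpha : R) (ha0 : 0 <= alpha) (ha1 : alpha <= pi / 2)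
  (A : 'M[R]_D) (hAskew : A^T = - A) (hA2 : A *m A = - 1%:M)
  (hdiag : forall j,
     dotv (mu j) ((cos alpha *: 1%:M + sin alpha *: A) *m mu j) = cos alpha) :
  let Rm := cos alpha *: 1%:M + sin alpha *: A in
  let w := fun j => Rm *m mu j in
  let zeta := fun c c' => sin alpha * dotv (mu c) (A *m mu c') in
  forall c : 'I_C,
    (forall c' : 'I_C, c' != c ->
       dotv (mu c) (w c') = - (cos alpha / (C%:R - 1)) + zeta c c')
    /\ \sum_(c' < C | c' != c) zeta c c' = 0.
Proof.
move=> Rm w zeta c; split=> [c' c'c|].
  by rewrite /w dotv_rotation hsimp 1?eq_sym // mulrN mul1r mulrC.
by rewrite -mulr_sumr simplex_sum_neq_skew ?mulr0.
Qed.
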